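(* Let $(X,\Pi)$ be a quasiconcave quasisubmodular aggregative game with aggregator $a$, and let $x^*$ be a fESS of it. If $x\in X$ is between some $x'\in X$ and $x^*$, then $\Pi(x,a(x,x'))\ge\Pi(x',a(x,x'))$.
   Context: An aggregative game $(X,\Pi)$ consists of: a totally ordered action set $X$ and a totally ordered set $Z$; an aggregator $a:X\times X\to Z$ that is symmetric ($a(x,y)=a(y,x)$) and monotone increasing (if $x''\ge x'$, $y''\ge y'$ and $(x'',y'')\neq(x',y')$ then $a(x'',y'')>a(x',y')$); and $\Pi:X\times Z\to\mathbb{R}$, the underlying symmetric two-player game having payoff $\pi(x,y)=\Pi(x,a(x,y))$. It is quasisubmodular if for all $z''>z'$ in $Z$ and $x''>x'$ in $X$: $\Pi(x'',z'')-\Pi(x',z'')\ge0\Rightarrow\Pi(x'',z')-\Pi(x',z')\ge0$ and $\Pi(x'',z'')-\Pi(x',z'')>0\Rightarrow\Pi(x'',z')-\Pi(x',z')>0$. It is quasiconcave if for all $x<x'<x''$ in $X$ and $z\in Z$, $\Pi(x',z)\ge\min\{\Pi(x,z),\Pi(x'',z)\}$. An action $x^*$ is a fESS if $\Pi(x^*,a(x^*,x))\ge\Pi(x,a(x^*,x))$ for all $x\in X$. $x$ is between $x'$ and $x^*$ if $x'\le x\le x^*$ or $x^*\le x\le x'$. *)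

From HB Require Import structures.
From mathcomp Require Import all_boot all_order all_algebra.
From mathcomp Require Import Rstruct.
From Stdlib Require Import Reals.
Set Implicit Arguments. Unset Strict Implicit. Unset Printing Implicit Defensive.
Import Order.TTheory GRing.Theory Num.Theory.
Local Open Scope order_scope.

Section Agg.
Context {dX dZ : Order.disp_t} (X : orderType dX) (Z : orderType dZ).

Definition symmetric_agg (a : X -> X -> Z) : Prop :=
  forall x y, a x y = a y x.

Definition monotone_agg (a : X -> X -> Z) : Prop :=
  forall x' x'' y' y'', x' <= x'' -> y' <= y'' -> (x'', y'') <> (x', y') ->
    a x' y' < a x'' y''.

Definition aggregator (a : X -> X -> Z) : Prop :=
  symmetric_agg a /\ monotone_agg a.

Definition quasisubmodular (Pi : X -> Z -> R) : Prop :=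
  forall (z' z'' : Z) (x' x'' : X), z' < z'' -> x' < x'' ->
    ((0 <= Pi x'' z'' - Pi x' z'')%R -> (0 <= Pi x'' z' - Pi x' z')%R) /\
    ((0 < Pi x'' z'' - Pi x' z'')%R -> (0 < Pi x'' z' - Pi x' z')%R).

Definition quasiconcave (Pi : X -> Z -> R) : Prop :=
  forall (x x' x'' : X) (z : Z), x < x' -> x' < x'' ->
    (Rmin (Pi x z) (Pi x'' z) <= Pi x' z)%R.

Definition fESS (a : X -> X -> Z) (Pi : X -> Z -> R) (xs : X) : Prop :=
  forall x : X, (Pi x (a xs x) <= Pi xs (a xs x))%R.

Definition between (x x' xs : X) : Prop :=
  (x' <= x /\ x <= xs) \/ (xs <= x /\ x <= x').

End Agg.

(* The fESS inequality Pi x' (a(x*,x')) <= Pi x* (a(x*,x')) says that x* is weakly preferred to x'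
   at the aggregate a(x*,x').  Moving the aggregate to a(x,x') for x between x' and x* shifts it
   towards a(x',x'), and single crossing (quasisubmodularity, in its weak form when the aggregate
   decreases and its strict form when it increases) transports the preference of x* over x' to
   the new aggregate.  Quasiconcavity then puts the intermediate x above the worse of x' and x*,
   which is x'. *)

From mathcomp Require Import all_boot all_order all_algebra.
From mathcomp Require Import Rstruct.
From Stdlib Require Import Reals Lra.
Import Order.TTheory.
Local Open Scope order_scope.

Section AggregativeGame.
Context {dX dZ : Order.disp_t} {X : orderType dX} {Z : orderType dZ}.
Implicit Types (a : X -> X -> Z) (Pi : X -> Z -> R).

Lemma monotone_agg_ltl {a} (y : X) {u v : X} :
  monotone_agg a -> u < v -> a u y < a v y.
Proof.
move=> Hmon Huv; apply: Hmon; [exact: ltW | by [] |].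
by case=> Evu; move: Huv; rewrite Evu ltxx.
Qed.

Lemma quasisubmodular_le_down {Pi} {z' z'' : Z} {u v : X} :
  quasisubmodular Pi -> z' < z'' -> u < v ->
  (Pi u z'' <= Pi v z'' -> Pi u z' <= Pi v z')%R.
Proof. by move=> Hqs Hz Huv H; have [/(_ ltac:(lra)) ? _] := Hqs _ _ _ _ Hz Huv; lra. Qed.

Lemma quasisubmodular_le_up {Pi} {z' z'' : Z} {u v : X} :
  quasisubmodular Pi -> z' < z'' -> u < v ->
  (Pi v z' <= Pi u z' -> Pi v z'' <= Pi u z'')%R.
Proof.
move=> Hqs Hz Huv H; have [_ Hstrict] := Hqs _ _ _ _ Hz Huv.
by apply: Rnot_lt_le => Hlt; have := Hstrict ltac:(lra); lra.
Qed.

Lemma quasiconcave_between {Pi} {x x' xs : X} {z : Z} {c : R} :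
  quasiconcave Pi -> between x x' xs ->
  (c <= Pi x' z -> c <= Pi xs z -> c <= Pi x z)%R.
Proof.
move=> Hqc Hb Hc' Hcs.
have Hmin (u v w : X) : u < v -> v < w -> (c <= Pi u z -> c <= Pi w z -> c <= Pi v z)%R.
  by move=> Huv Hvw Hu Hw; apply: Rle_trans (Hqc _ _ _ z Huv Hvw); exact: Rmin_glb.
case: Hb => [[H1 H2]|[H1 H2]].
- move: H1 H2; rewrite !le_eqVlt => /predU1P [<- //|H1] /predU1P [-> //|H2].
  exact: Hmin H1 H2 Hc' Hcs.
- move: H1 H2; rewrite !le_eqVlt => /predU1P [<- //|H1] /predU1P [-> //|H2].
  exact: Hmin H1 H2 Hcs Hc'.
Qed.

Lemma fESS_le_between {a Pi} {xs x x' : X} :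
  monotone_agg a -> quasisubmodular Pi -> fESS a Pi xs -> between x x' xs ->
  (Pi x' (a x x') <= Pi xs (a x x'))%R.
Proof.
move=> Hmon Hqs Hess Hb.
have [-> | Hne] := eqVneq x xs; first exact: Hess.
have Hinvade := Hess x'.
case: Hb => [[H1 H2]|[H1 H2]].
- have Hlt : x < xs by rewrite lt_neqAle Hne.
  apply: quasisubmodular_le_down Hinvade => //.
  + exact: monotone_agg_ltl.
  + exact: le_lt_trans H1 Hlt.
- have Hlt : xs < x by rewrite lt_neqAle eq_sym Hne.
  apply: quasisubmodular_le_up Hinvade => //.
  + exact: monotone_agg_ltl.
  + exact: lt_le_trans Hlt H2.
Qed.

End AggregativeGame.

Theorem lemma6 {dX dZ : Order.disp_t} (X : orderType dX) (Z : orderType dZ)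
  (a : X -> X -> Z) (Pi : X -> Z -> R)
  (Ha : aggregator a) (Hqs : quasisubmodular Pi) (Hqc : quasiconcave Pi)
  (xs : X) (Hess : fESS a Pi xs) (x x' : X) (Hb : between x x' xs) :
  (Pi x' (a x x') <= Pi x (a x x'))%R.
Proof.
have [_ Hmon] := Ha.
have Hdom := fESS_le_between Hmon Hqs Hess Hb.
exact: quasiconcave_between Hqc Hb (Rle_refl _) Hdom.
Qed.
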